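(* (Extended Perron's method.) Let $\Omega\subset\mathbb{R}^N$ be an open domain, let $g:\mathbb{R}^N\setminus\Omega\to\mathbb{R}$ be bounded, and let $\mathcal{A}:\mathbb{R}^N\times\mathcal{X}\times\mathbb{R}\to\mathbb{R}$ satisfy assumptions (a), (b), (c) below. Consider the DPP $\mathcal{A}(x,u,u(x))=0$ for $x\in\Omega$, $u=g$ on $\mathbb{R}^N\setminus\Omega$. Assume (H1) there exists at least one viscosity subsolution and (H2) all viscosity subsolutions are uniformly bounded from above. Let $\underline{S}$ be the set of all viscosity subsolutions. Then the function $$\overline{u}(x)=\sup_{v\in\underline{S}}v(x)\ \ (x\in\Omega),\qquad \overline{u}(x)=g(x)\ \ (x\in\mathbb{R}^N\setminus\Omega)$$ is a viscosity solution of the DPP. Respectively, if (H1* ) there exists at least one viscosity supersolution and (H2* ) all viscosity supersolutions are uniformly bounded from below, and $\overline{S}$ is the set of all viscosity supersolutions, then $\underline{u}(x)=\inf_{v\in\overline{S}}v(x)$ for $x\in\Omega$, $\underline{u}=g$ on $\mathbb{R}^N\setminus\Omega$, is a viscosity solution of the DPP.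
   Context: $\overline{\mathcal{X}}$ is the set of bounded functions $\mathbb{R}^N\to\mathbb{R}$, $\mathcal{X}\subset\overline{\mathcal{X}}$ a fixed subset. Assumptions: (a) $\varphi_1\le\varphi_2$ implies $\mathcal{A}(x,\varphi_2,s)\le\mathcal{A}(x,\varphi_1,s)$; (b) $s_1\le s_2$ implies $\mathcal{A}(x,\varphi,s_1)\le\mathcal{A}(x,\varphi,s_2)$; (c) for every $(x,\varphi)$ the map $s\mapsto\mathcal{A}(x,\varphi,s)$ has exactly one zero. $u\in\overline{\mathcal{X}}$ is a viscosity supersolution of the DPP if $u\ge g$ on $\mathbb{R}^N\setminus\Omega$ and, for each $x\in\Omega$, $\mathcal{A}(x,\varphi,u(x))\ge0$ for all $\varphi\in\mathcal{X}$ with $\varphi\le u$; a viscosity subsolution if $u\le g$ on $\mathbb{R}^N\setminus\Omega$ and, for each $x\in\Omega$, $\mathcal{A}(x,\varphi,u(x))\le0$ for all $\varphi\in\mathcal{X}$ with $\varphi\ge u$; a viscosity solution is a $u\in\overline{\mathcal{X}}$ that is both. *)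

From HB Require Import structures.
From mathcomp Require Import all_boot all_order all_algebra.
From mathcomp Require Import all_classical all_reals all_analysis.
Set Implicit Arguments. Unset Strict Implicit. Unset Printing Implicit Defensive.
Import Order.TTheory GRing.Theory Num.Theory.
Import numFieldNormedType.Exports.
Local Open Scope classical_set_scope.
Local Open Scope ring_scope.

Section DPP.
Variables (R : realType) (N : nat).
Notation pt := 'rV[R]_N.

Definition bounded_fn (f : pt -> R) : Prop := exists M : R, forall x, `|f x| <= M.

Variables (Omega : set pt) (g : pt -> R) (X : set (pt -> R))
  (A : pt -> (pt -> R) -> R -> R).

Definition assum_a : Prop := forall x phi1 phi2, X phi1 -> X phi2 ->
  (forall y, phi1 y <= phi2 y) -> forall s, A x phi2 s <= A x phi1 s.
Definition assum_b : Prop := forall x phi, X phi -> forall s1 s2,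
  s1 <= s2 -> A x phi s1 <= A x phi s2.
Definition assum_c : Prop := forall x phi, X phi ->
  exists s, A x phi s = 0 /\ forall t, A x phi t = 0 -> t = s.

Definition visc_super (u : pt -> R) : Prop :=
  bounded_fn u /\
  (forall x, ~ Omega x -> g x <= u x) /\
  (forall x, Omega x -> forall phi, X phi -> (forall y, phi y <= u y) ->
     0 <= A x phi (u x)).

Definition visc_sub (u : pt -> R) : Prop :=
  bounded_fn u /\
  (forall x, ~ Omega x -> u x <= g x) /\
  (forall x, Omega x -> forall phi, X phi -> (forall y, u y <= phi y) ->
     A x phi (u x) <= 0).

Definition visc_sol (u : pt -> R) : Prop := visc_super u /\ visc_sub u.

Definition perron_sup : pt -> R := fun x =>
  if `[< Omega x >] then sup [set v x | v in visc_sub] else g x.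
Definition perron_inf : pt -> R := fun x =>
  if `[< Omega x >] then inf [set v x | v in visc_super] else g x.

End DPP.

(* The sup U of all subsolutions is a subsolution: by (b) and (c),
   A x phi s <= 0 holds exactly when s lies below the unique zero of
   A x phi, a condition preserved under suprema.  It is also a
   supersolution: if A x phi (U x) < 0 for some phi <= U, then U x lies
   strictly below the zero s0 of A x phi, and by (a) raising U to s0 at the
   single point x gives a subsolution exceeding U, contradicting maximality.
   The statement for infima follows by the symmetry u |-> -u, which swaps
   sub- and supersolutions of the problem and of its reflection. *)
From HB Require Import structures.
From mathcomp Require Import all_boot all_order all_algebra.
From mathcomp Require Import all_classical all_reals all_analysis.
From mathcomp Require Import lra.
Import Order.TTheory GRing.Theory Num.Theory.
Import numFieldNormedType.Exports.
Local Open Scope classical_set_scope.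
Local Open Scope ring_scope.

Section BoundedFn.
Context {R : realType} {N : nat}.
Notation pt := 'rV[R]_N.

Lemma bounded_fn_patch (D : set pt) (f : pt -> R) :
  (exists M, forall y, D y -> `|f y| <= M) ->
  (exists M, forall y, ~ D y -> `|f y| <= M) -> bounded_fn f.
Proof.
move=> [M1 fM1] [M2 fM2]; exists (Num.max M1 M2) => y.
by have [/fM1|/fM2] := pselect (D y); rewrite le_max => ->; rewrite ?orbT.
Qed.

Lemma bounded_fn_update (u : pt -> R) (x : pt) (s : R) :
  bounded_fn u -> bounded_fn (fun y => if y == x then s else u y).
Proof.
move=> [B uB]; exists (Num.max `|s| B) => y.
by case: eqP => _; rewrite le_max ?lexx ?uB ?orbT.
Qed.

End BoundedFn.

Section UniqueZero.
Context {R : realType} {N : nat} {X : set ('rV[R]_N -> R)}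
  {A : 'rV[R]_N -> ('rV[R]_N -> R) -> R -> R}.
Hypotheses (hb : assum_b X A) (hc : assum_c X A).
Context {x : 'rV[R]_N} {phi : 'rV[R]_N -> R} {s0 : R}.
Hypotheses (Xphi : X phi) (A_s0 : A x phi s0 = 0).

Lemma zero_unique {s} : A x phi s = 0 -> s = s0.
Proof. by have [z [_ zU]] := hc x phi Xphi; move=> /zU ->; rewrite (zU _ A_s0). Qed.

Lemma A_le0E s : (A x phi s <= 0) = (s <= s0).
Proof.
apply/idP/idP => [As_le0|le_s_s0]; last by rewrite -A_s0; exact: hb.
rewrite leNgt; apply/negP => lt_s0_s.
have As_ge0 : 0 <= A x phi s by rewrite -A_s0; exact: hb (ltW lt_s0_s).
have As0 : A x phi s = 0 by apply/eqP; rewrite eq_le As_le0 As_ge0.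
by rewrite (zero_unique As0) ltxx in lt_s0_s.
Qed.

Lemma A_ge0E s : (0 <= A x phi s) = (s0 <= s).
Proof.
apply/idP/idP => [As_ge0|le_s0_s]; last by rewrite -A_s0; exact: hb.
rewrite leNgt; apply/negP => lt_s_s0.
have As_le0 : A x phi s <= 0 by rewrite -A_s0; exact: hb (ltW lt_s_s0).
have As0 : A x phi s = 0 by apply/eqP; rewrite eq_le As_le0 As_ge0.
by rewrite (zero_unique As0) ltxx in lt_s_s0.
Qed.

End UniqueZero.

Section PerronSup.
Variables (R : realType) (N : nat) (Omega : set 'rV[R]_N)
  (g : 'rV[R]_N -> R) (X : set ('rV[R]_N -> R))
  (A : 'rV[R]_N -> ('rV[R]_N -> R) -> R -> R).
Hypotheses (ha : assum_a X A) (hb : assum_b X A) (hc : assum_c X A).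
Hypothesis g_bounded : exists M : R, forall x, ~ Omega x -> `|g x| <= M.
Hypothesis sub_exists : exists v, visc_sub Omega g X A v.
Hypothesis sub_ubounded :
  exists M : R, forall v, visc_sub Omega g X A v -> forall x, v x <= M.

Let sub := visc_sub Omega g X A.
Let U := perron_sup Omega g X A.

Lemma perron_sup_in x : Omega x -> U x = sup [set v x | v in sub].
Proof. by move=> Ox; rewrite /U /perron_sup asboolT. Qed.

Lemma perron_sup_out x : ~ Omega x -> U x = g x.
Proof. by move=> Ox; rewrite /U /perron_sup asboolF. Qed.

Lemma sub_values_neq0 x : [set v x | v in sub] !=set0.
Proof. by have [v subv] := sub_exists; exists (v x), v. Qed.

Lemma sub_values_ubounded x : has_ubound [set v x | v in sub].
Proof. by have [M subM] := sub_ubounded; exists M => _ [v subv <-]; exact: subM. Qed.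

Lemma sub_le_perron_sup {v} : sub v -> forall y, v y <= U y.
Proof.
move=> subv y; have [Oy|Oy] := pselect (Omega y).
  by rewrite perron_sup_in //; apply: ub_le_sup; [exact: sub_values_ubounded|exists v].
by rewrite perron_sup_out //; exact: subv.2.1.
Qed.

Lemma perron_sup_le_ub : exists M, forall y, Omega y -> U y <= M.
Proof.
have [M subM] := sub_ubounded; exists M => y Oy; rewrite perron_sup_in //.
by apply: ge_sup; [exact: sub_values_neq0|move=> _ [v subv <-]; exact: subM].
Qed.

Lemma perron_sup_bounded : bounded_fn U.
Proof.
apply: (bounded_fn_patch Omega).
  have [v0 subv0] := sub_exists; have [[M0 v0M0] _] := subv0.
  have [M UM] := perron_sup_le_ub; exists (M0 + `|M|) => y Oy.
  have v0_le_U := sub_le_perron_sup subv0 y; have U_le_M := UM y Oy.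
  have M_le_normM := ler_norm M; have normM_ge0 := normr_ge0 M.
  have M0_ge0 := le_trans (normr_ge0 _) (v0M0 y); have /ler_normlP[v0_lb _] := v0M0 y.
  by rewrite ler_norml; apply/andP; split; lra.
have [Mg gMg] := g_bounded.
by exists Mg => y Oy; rewrite perron_sup_out //; exact: gMg.
Qed.

Lemma perron_sup_sub : sub U.
Proof.
split; first exact: perron_sup_bounded.
split; first by move=> x Ox; rewrite perron_sup_out.
move=> x Ox phi Xphi U_le_phi; have [s0 [A_s0 _]] := hc x phi Xphi.
rewrite (A_le0E hb hc Xphi A_s0) perron_sup_in //.
apply: ge_sup => [|_ [v subv <-]]; first exact: sub_values_neq0.
rewrite -(A_le0E hb hc Xphi A_s0); apply: subv.2.2 => // y.
exact: le_trans (sub_le_perron_sup subv y) (U_le_phi y).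
Qed.

Lemma perron_sup_super : visc_super Omega g X A U.
Proof.
split; first exact: perron_sup_bounded.
split; first by move=> x Ox; rewrite perron_sup_out.
move=> x Ox phi Xphi phi_le_U; have [s0 [A_s0 _]] := hc x phi Xphi.
rewrite (A_ge0E hb hc Xphi A_s0) leNgt; apply/negP => Ux_lt_s0.
pose w y := if y == x then s0 else U y.
have U_le_w y : U y <= w y by rewrite /w; case: eqP => [->|_]; [exact: ltW|].
suff /sub_le_perron_sup/(_ x) : sub w by rewrite /w eqxx leNgt Ux_lt_s0.
split; first exact/bounded_fn_update/perron_sup_bounded.
split=> [y Oy|y Oy psi Xpsi w_le_psi]; rewrite /w; case: eqP => [y_x|_].
- by rewrite y_x in Oy.
- by rewrite perron_sup_out.
- (* by (a), psi >= w >= U >= phi gives A x psi s0 <= A x phi s0 = 0 *)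
  rewrite y_x -A_s0; apply: ha => // z.
  exact: le_trans (phi_le_U z) (le_trans (U_le_w z) (w_le_psi z)).
- by apply: perron_sup_sub.2.2 => // z; exact: le_trans (U_le_w z) (w_le_psi z).
Qed.

Lemma perron_sup_sol : visc_sol Omega g X A U.
Proof. by split; [exact: perron_sup_super|exact: perron_sup_sub]. Qed.

End PerronSup.

Section Reflection.
Context {R : realType} {N : nat}.
Notation pt := 'rV[R]_N.

Definition dual_X (X : set (pt -> R)) : set (pt -> R) := [set phi | X (- phi)].

Definition dual_A (A : pt -> (pt -> R) -> R -> R) : pt -> (pt -> R) -> R -> R :=
  fun x phi s => - A x (- phi) (- s).

Lemma dual_XK X : dual_X (dual_X X) = X.
Proof. by apply/funext => phi; rewrite /dual_X /= opprK. Qed.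

Lemma dual_AK A : dual_A (dual_A A) = A.
Proof.
by apply/funext => x; apply/funext => phi; apply/funext => s; rewrite /dual_A !opprK.
Qed.

Variables (X : set (pt -> R)) (A : pt -> (pt -> R) -> R -> R).

Lemma assum_a_dual : assum_a X A -> assum_a (dual_X X) (dual_A A).
Proof.
move=> ha x phi1 phi2 X1 X2 le12 s; rewrite /dual_A lerN2.
by apply: ha => // y; rewrite !fctE lerN2.
Qed.

Lemma assum_b_dual : assum_b X A -> assum_b (dual_X X) (dual_A A).
Proof.
by move=> hb x phi Xphi s1 s2 le12; rewrite /dual_A lerN2; apply: hb; rewrite // lerN2.
Qed.

Lemma assum_c_dual : assum_c X A -> assum_c (dual_X X) (dual_A A).
Proof.
move=> hc x phi Xphi; have [s [A_s zero_s]] := hc x _ Xphi.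
exists (- s); split=> [|t]; first by rewrite /dual_A opprK A_s oppr0.
by rewrite /dual_A => /eqP; rewrite oppr_eq0 => /eqP/zero_s <-; rewrite opprK.
Qed.

Lemma bounded_fnN (u : pt -> R) : bounded_fn u -> bounded_fn (- u).
Proof. by move=> [M uM]; exists M => y; rewrite fctE normrN. Qed.

Variables (Omega : set pt) (g : pt -> R).

Lemma visc_super_dual u :
  visc_super Omega g X A u <-> visc_sub Omega (- g) (dual_X X) (dual_A A) (- u).
Proof.
split=> [[u_bdd [u_ge_g u_super]]|[Nu_bdd [Nu_le_Ng Nu_sub]]].
- split; first exact: bounded_fnN.
  split=> [x Ox|x Ox phi Xphi u_le_phi]; first by rewrite !fctE lerN2 u_ge_g.
  rewrite /dual_A fctE opprK oppr_le0; apply: u_super => // y.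
  by rewrite lerNl; exact: u_le_phi.
- split; first by rewrite -(opprK u); exact: bounded_fnN.
  split=> [x Ox|x Ox phi Xphi phi_le_u]; first by rewrite -lerN2; exact: Nu_le_Ng.
  have := Nu_sub x Ox (- phi).
  rewrite /dual_A /dual_X /= opprK -[(- u) x]/(- u x) opprK oppr_le0.
  by apply=> // y; rewrite lerN2.
Qed.

End Reflection.

Section ReflectionSymmetry.
Variables (R : realType) (N : nat) (Omega : set 'rV[R]_N)
  (g : 'rV[R]_N -> R) (X : set ('rV[R]_N -> R))
  (A : 'rV[R]_N -> ('rV[R]_N -> R) -> R -> R).

Lemma visc_sub_dual u :
  visc_sub Omega g X A u <-> visc_super Omega (- g) (dual_X X) (dual_A A) (- u).
Proof.
have dual_dual := visc_super_dual (dual_X X) (dual_A A) Omega (- g) (- u).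
by rewrite dual_XK dual_AK !opprK in dual_dual; exact: iff_sym.
Qed.

Lemma visc_sol_dual u :
  visc_sol Omega g X A u <-> visc_sol Omega (- g) (dual_X X) (dual_A A) (- u).
Proof.
split=> -[super sub]; split.
- exact/visc_sub_dual.
- exact/visc_super_dual.
- exact/visc_super_dual.
- exact/visc_sub_dual.
Qed.

Lemma perron_inf_dual :
  perron_inf Omega g X A = - perron_sup Omega (- g) (dual_X X) (dual_A A).
Proof.
apply/funext => x; rewrite fctE /perron_inf /perron_sup.
case: (asboolP (Omega x)) => Ox; last by rewrite fctE opprK.
rewrite /inf; congr (- sup _); apply/seteqP; split.
- by move=> _ [_ [v superv <-] <-]; exists (- v) => //; exact/visc_super_dual.
- move=> _ [v subv <-]; exists (- v x); last by rewrite opprK.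
  by exists (- v) => //; apply/visc_super_dual; rewrite opprK.
Qed.

End ReflectionSymmetry.

Section PerronInf.
Variables (R : realType) (N : nat) (Omega : set 'rV[R]_N)
  (g : 'rV[R]_N -> R) (X : set ('rV[R]_N -> R))
  (A : 'rV[R]_N -> ('rV[R]_N -> R) -> R -> R).
Hypotheses (ha : assum_a X A) (hb : assum_b X A) (hc : assum_c X A).
Hypothesis g_bounded : exists M : R, forall x, ~ Omega x -> `|g x| <= M.
Hypothesis super_exists : exists v, visc_super Omega g X A v.
Hypothesis super_lbounded :
  exists M : R, forall v, visc_super Omega g X A v -> forall x, M <= v x.

Lemma perron_inf_sol : visc_sol Omega g X A (perron_inf Omega g X A).
Proof.
rewrite perron_inf_dual; apply/visc_sol_dual; rewrite opprK.
apply: perron_sup_sol.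
- exact: assum_a_dual.
- exact: assum_b_dual.
- exact: assum_c_dual.
- by have [M gM] := g_bounded; exists M => x Ox; rewrite fctE normrN; exact: gM.
- by have [v superv] := super_exists; exists (- v); exact/visc_super_dual.
- have [M superM] := super_lbounded; exists (- M) => w subw x.
  have superNw : visc_super Omega g X A (- w) by apply/visc_super_dual; rewrite opprK.
  by rewrite lerNr; exact: superM superNw x.
Qed.

End PerronInf.

Theorem mainTheorem6 (R : realType) (N : nat) (Omega : set 'rV[R]_N)
  (g : 'rV[R]_N -> R) (X : set ('rV[R]_N -> R))
  (A : 'rV[R]_N -> ('rV[R]_N -> R) -> R -> R) :
  open Omega -> connected Omega ->
  (exists M : R, forall x, ~ Omega x -> `|g x| <= M) ->
  (forall phi, X phi -> bounded_fn phi) ->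
  assum_a X A -> assum_b X A -> assum_c X A ->
  ((exists v, visc_sub Omega g X A v) ->
   (exists M : R, forall v, visc_sub Omega g X A v -> forall x, v x <= M) ->
   visc_sol Omega g X A (perron_sup Omega g X A)) /\
  ((exists v, visc_super Omega g X A v) ->
   (exists M : R, forall v, visc_super Omega g X A v -> forall x, M <= v x) ->
   visc_sol Omega g X A (perron_inf Omega g X A)).
Proof.
move=> _ _ g_bounded _ ha hb hc; split.
- by move=> sub_exists sub_ubounded; exact: perron_sup_sol.
- by move=> super_exists super_lbounded; exact: perron_inf_sol.
Qed.
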